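(* Let $X=\{a_1,\dots,a_\ell\}$ be a finite set of $\ell$ distinct points, $N\ge2$, and $\lambda_*\in\mathcal{P}(X)$. (a) Let $\mathcal{P}_{SAE,\lambda_*}(X^N)$ be the set of probability measures on $X^N$ of the form $\sum_{\lambda\in\mathcal{P}_{\frac1N}(X)}\alpha_\lambda\psi_N(\lambda)$, where $(\alpha_\lambda)$ is a probability vector on $\mathcal{P}_{\frac1N}(X)$ with $\sum_\lambda\alpha_\lambda\lambda=\lambda_*$ and with $\alpha_\lambda>0$ for at most $\ell$ elements $\lambda$. Let $\mathcal{P}_{sym,\lambda_*}(X^N)=\{\gamma\in\mathcal{P}_{sym}(X^N):M_1\gamma=\lambda_*\}$. Then every extreme point of $\mathcal{P}_{sym,\lambda_*}(X^N)$ lies in $\mathcal{P}_{SAE,\lambda_*}(X^N)$, and $\mathcal{P}_{SAE,\lambda_*}(X^N)\subseteq\mathcal{P}_{sym,\lambda_*}(X^N)$. (b) Let $\mathcal{P}_{N,SAE,\lambda_*}(X^2)$ be the set of probability measures on $X^2$ of the form $\sum_{\lambda\in\mathcal{P}_{\frac1N}(X)}\alpha_\lambda\varphi_N(\lambda)$ with $(\alpha_\lambda)$ as in (a). Let $\mathcal{P}_{N\text{-}rep,\lambda_*}(X^2)=\{\mu\in\mathcal{P}_{N\text{-}rep}(X^2):M_1\mu=\lambda_*\}$. Then every extreme point of $\mathcal{P}_{N\text{-}rep,\lambda_*}(X^2)$ lies in $\mathcal{P}_{N,SAE,\lambda_*}(X^2)$, and $\mathcal{P}_{N,SAE,\lam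bda_*}(X^2)\subseteq\mathcal{P}_{N\text{-}rep,\lambda_*}(X^2)$.
   Context: $\mathcal{P}(X)$ denotes probability measures on $X$, identified with vectors $(\lambda_i)$, $\lambda_i=\lambda(\{a_i\})$; $\delta_i$ is the Dirac measure at $a_i$; $\mathcal{P}_{\frac1N}(X)=\{\lambda\in\mathcal{P}(X):\lambda_i\in\frac1N\mathbb{Z}\ \forall i\}$. The symmetrization operator is $(S\gamma)(A_1\times\cdots\times A_N)=\frac1{N!}\sum_{\sigma\in S_N}\gamma(A_{\sigma(1)}\times\cdots\times A_{\sigma(N)})$; $\mathcal{P}_{sym}(X^N)$ is the set of probability measures $\gamma$ on $X^N$ with $S\gamma=\gamma$; $M_1$ denotes the one-point marginal, $(M_1\gamma)(A)=\gamma(A\times X^{N-1})$ (and for $\mu$ on $X^2$, $(M_1\mu)(A)=\mu(A\times X)$). A probability measure $\mu$ on $X^2$ is $N$-representable if $\mu(A)=\gamma(A\times X^{N-2})$ for all $A\subseteq X^2$ for some $\gamma\in\mathcal{P}_{sym}(X^N)$; $\mathcal{P}_{N\text{-}rep}(X^2)$ is the set of these. For $\lambda\in\mathcal{P}_{\frac1N}(X)$, $\psi_N(\lambda)=S(\delta_{a_{i_1}}\otimes\cdots\otimes\delta_{a_{i_N}})$ where $i_1\le\dots\le i_N$ is the nondecreasing index sequence in which each $i$ appears exactly $N\lambda_i$ times, and $\varphi_N(\lambda)=\lambda\otimes\lambda+\frac1{N-1}\big(\lambda\otimes\lambda-\sum_{i=1}^\ell\lambda_i\delta_i\otimes\delta_i\big)$.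 *)

From HB Require Import structures.
From mathcomp Require Import all_boot all_order all_algebra.
From mathcomp Require Import fingroup perm.
From mathcomp Require Import reals.
Set Implicit Arguments. Unset Strict Implicit. Unset Printing Implicit Defensive.
Import Order.TTheory GRing.Theory Num.Theory.
Local Open Scope ring_scope.

(* X = {a_1,...,a_l} is represented by the index type 'I_l (a_i <-> i).
   A point of X^N is a function 'I_N -> 'I_l; a measure on a finite set T
   is given by its point masses, a finite function T -> R. *)

Section Defs.
Variable R : realType.

Definition cfg (l N : nat) := {ffun 'I_N -> 'I_l}.

Definition isProb (T : finType) (p : {ffun T -> R}) : Prop :=
  (forall x, 0 <= p x) /\ \sum_x p x = 1.

(* "the k-th coordinate (0-based) of x equals a" *)
Definition coordIs (l N : nat) (x : cfg l N) (k : nat) (a : 'I_l) : bool :=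
  [exists i : 'I_N, (val i == k) && (x i == a)].

Definition M1 (l N : nat) (g : {ffun cfg l N -> R}) : {ffun 'I_l -> R} :=
  [ffun a => \sum_(x : cfg l N | coordIs x 0 a) g x].

Definition M2 (l N : nat) (g : {ffun cfg l N -> R}) : {ffun 'I_l * 'I_l -> R} :=
  [ffun p => \sum_(x : cfg l N | coordIs x 0 p.1 && coordIs x 1 p.2) g x].

Definition M1two (l : nat) (mu : {ffun 'I_l * 'I_l -> R}) : {ffun 'I_l -> R} :=
  [ffun a => \sum_(b : 'I_l) mu (a, b)].

Definition symmetrize (l N : nat) (g : {ffun cfg l N -> R}) : {ffun cfg l N -> R} :=
  [ffun x : cfg l N => (N`!%:R)^-1 * \sum_(s : 'S_N) g [ffun i => x (s i)]].

Definition Psym (l N : nat) (g : {ffun cfg l N -> R}) : Prop :=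
  isProb g /\ symmetrize g = g.

Definition Psym_at (l N : nat) (ls : {ffun 'I_l -> R}) (g : {ffun cfg l N -> R}) : Prop :=
  Psym g /\ M1 g = ls.

Definition Nrep (l N : nat) (mu : {ffun 'I_l * 'I_l -> R}) : Prop :=
  isProb mu /\ exists g : {ffun cfg l N -> R}, Psym g /\ M2 g = mu.

Definition Nrep_at (l N : nat) (ls : {ffun 'I_l -> R}) (mu : {ffun 'I_l * 'I_l -> R}) : Prop :=
  Nrep N mu /\ M1two mu = ls.

Definition P1N (l N : nat) (lam : {ffun 'I_l -> R}) : Prop :=
  isProb lam /\ forall i, exists k : nat, lam i = k%:R / N%:R.

Definition mult (l N : nat) (lam : {ffun 'I_l -> R}) (i : 'I_l) : nat :=
  Num.truncn (lam i * N%:R).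

Definition sortedSeq (l N : nat) (lam : {ffun 'I_l -> R}) : seq 'I_l :=
  flatten [seq nseq (mult N lam i) i | i <- enum 'I_l].

Definition prodDirac (l N : nat) (s : seq 'I_l) : {ffun cfg l N -> R} :=
  [ffun x : cfg l N => if [seq x i | i <- enum 'I_N] == s then 1 else 0].

Definition psiN (l N : nat) (lam : {ffun 'I_l -> R}) : {ffun cfg l N -> R} :=
  symmetrize (prodDirac N (sortedSeq N lam)).

Definition phiN (l N : nat) (lam : {ffun 'I_l -> R}) : {ffun 'I_l * 'I_l -> R} :=
  [ffun p => lam p.1 * lam p.2
     + (N%:R - 1)^-1 * (lam p.1 * lam p.2 - (p.1 == p.2)%:R * lam p.1)].

(* admissible coefficients: alpha is a probability vector on P_{1/N}(X),
   supported on the duplicate-free list S of at most l elements of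
   P_{1/N}(X) (alpha vanishes off S), with barycenter ls. *)
Definition admissible (l N : nat) (ls : {ffun 'I_l -> R})
    (S : seq {ffun 'I_l -> R}) (alpha : {ffun 'I_l -> R} -> R) : Prop :=
  [/\ uniq S, (size S <= l)%N,
      forall lam, lam \in S -> P1N N lam /\ 0 <= alpha lam,
      \sum_(lam <- S) alpha lam = 1
    & forall i, \sum_(lam <- S) alpha lam * lam i = ls i].

Definition SAE_at (l N : nat) (ls : {ffun 'I_l -> R}) (g : {ffun cfg l N -> R}) : Prop :=
  exists S alpha, admissible N ls S alpha /\
    forall x, g x = \sum_(lam <- S) alpha lam * psiN N lam x.

Definition NSAE_at (l N : nat) (ls : {ffun 'I_l -> R}) (mu : {ffun 'I_l * 'I_l -> R}) : Prop :=
  exists S alpha, admissible N ls S alpha /\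
    forall p, mu p = \sum_(lam <- S) alpha lam * phiN N lam p.

Definition extreme (T : finType) (C : {ffun T -> R} -> Prop) (g : {ffun T -> R}) : Prop :=
  C g /\ forall g1 g2 t, C g1 -> C g2 -> 0 < t < 1 ->
    (forall x, g x = t * g1 x + (1 - t) * g2 x) -> g1 = g2.

End Defs.

From HB Require Import structures.
From mathcomp Require Import all_boot all_order all_algebra.
From mathcomp Require Import fingroup perm.
From mathcomp Require Import reals.
From mathcomp Require Import ring lra.
Set Implicit Arguments. Unset Strict Implicit. Unset Printing Implicit Defensive.
Import Order.TTheory GRing.Theory Num.Theory.
Local Open Scope ring_scope.

(* A symmetric measure gamma on X^N is the average over S_N of its point
   masses, and symmetrizing the point mass at a configuration x gives
   psi_N of the empirical measure of x.  Grouping configurations by their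
   empirical measure writes gamma as a mixture of the psi_N(lam),
   lam in P_{1/N}(X), whose barycenter is M_1 gamma.  The pair counts of a
   configuration with occupation numbers N lam give M_2 psi_N(lam) = phi_N(lam),
   so taking two-point marginals does the same for N-representable measures;
   conversely every such mixture lies in the corresponding set.
   For an extreme point a Caratheodory argument bounds the support: more than
   l measures lam, all on the hyperplane sum_i lam_i = 1 of R^l, are affinely
   dependent; moving the weights along the dependence in either direction stays
   in the set, so by extremality the point does not move, and pushing the
   weights until one vanishes removes a lam. *)

Section PermutedConfigurations.
Variables (R : realType) (l N : nat).
Local Notation cf := (cfg l N).

Definition perm_cfg (x : cf) (s : 'S_N) : cf := [ffun i => x (s i)].

Lemma perm_cfgM x s t : perm_cfg (perm_cfg x s) t = perm_cfg x (t * s)%g.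
Proof. by apply/ffunP => i; rewrite !ffunE permM. Qed.

Lemma perm_cfg1 x : perm_cfg x 1 = x.
Proof. by apply/ffunP => i; rewrite !ffunE perm1. Qed.

Lemma perm_cfg_inj s : injective (perm_cfg ^~ s).
Proof.
by move=> x y /(congr1 (perm_cfg ^~ s^-1)%g); rewrite !perm_cfgM mulVg !perm_cfg1.
Qed.

Definition perm_invariant (F : cf -> R) := forall x s, F (perm_cfg x s) = F x.

Lemma symmetrizeE (g : {ffun cf -> R}) x :
  symmetrize g x = (N`!%:R)^-1 * \sum_(s : 'S_N) g (perm_cfg x s).
Proof. by rewrite ffunE. Qed.

Lemma natr_fact_neq0 : (N`!%:R : R) != 0.
Proof. by rewrite pnatr_eq0 -lt0n fact_gt0. Qed.

Lemma symmetrize_invariant g : perm_invariant (symmetrize g).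
Proof.
move=> x t; rewrite !symmetrizeE; congr (_ * _).
by rewrite [RHS](reindex_inj (mulIg t)); apply: eq_bigr => s _; rewrite perm_cfgM.
Qed.

Lemma symmetrize_id (g : {ffun cf -> R}) : perm_invariant g -> symmetrize g = g.
Proof.
move=> g_inv; apply/ffunP => x; rewrite symmetrizeE.
under eq_bigr do rewrite g_inv.
by rewrite sumr_const card_Sn -(mulr_natl (g x)) mulrA mulVf ?mul1r // natr_fact_neq0.
Qed.

Lemma sum_perm_cfg (F : cf -> R) s : \sum_x F (perm_cfg x s) = \sum_x F x.
Proof. by rewrite [RHS](reindex_inj (@perm_cfg_inj s)). Qed.

Lemma sum_invariant_mul_perm (g F : cf -> R) s : perm_invariant g ->
  \sum_x g x * F (perm_cfg x s) = \sum_x g x * F x.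
Proof.
by move=> g_inv; rewrite -[RHS](sum_perm_cfg _ s); apply: eq_bigr => x _; rewrite g_inv.
Qed.

Lemma sum_symmetrize_mul (h : {ffun cf -> R}) (F : cf -> R) : perm_invariant F ->
  \sum_x symmetrize h x * F x = \sum_x h x * F x.
Proof.
move=> F_inv.
under eq_bigr do rewrite symmetrizeE -mulrA mulr_suml.
rewrite -mulr_sumr exchange_big /=.
under eq_bigr => s _.
  rewrite -(sum_perm_cfg _ s^-1).
  under eq_bigr do rewrite perm_cfgM mulgV perm_cfg1 F_inv.
  over.
rewrite sumr_const card_Sn -(mulr_natl (\sum_x h x * F x)) mulrA.
by rewrite mulVf ?mul1r // natr_fact_neq0.
Qed.

Lemma symmetrize_perm (h : {ffun cf -> R}) q :
  symmetrize [ffun y => h (perm_cfg y q)] = symmetrize h.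
Proof.
apply/ffunP => x; rewrite !symmetrizeE; congr (_ * _).
by rewrite [RHS](reindex_inj (mulgI q)); apply: eq_bigr => s _; rewrite ffunE perm_cfgM.
Qed.

End PermutedConfigurations.

Lemma exists_perm_pair (T : finType) (i0 i1 k k' : T) : i0 != i1 -> k != k' ->
  exists p : {perm T}, p i0 = k /\ p i1 = k'.
Proof.
move=> i01 kk'; exists (tperm i0 k * tperm (tperm i0 k i1) k')%g.
rewrite !permM tpermL tpermD ?tpermL //; last by rewrite eq_sym.
by rewrite -[k in _ == k](tpermL i0 k) (inj_eq perm_inj) eq_sym.
Qed.

Section Occupation.
Variables (R : realType) (l N : nat).
Local Notation cf := (cfg l N).

Definition occ (x : cf) (a : 'I_l) : R := \sum_i (x i == a)%:R.

Lemma occ_perm x s a : occ (perm_cfg x s) a = occ x a.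
Proof.
rewrite /occ [RHS](reindex_inj (@perm_inj _ s)) /=.
by apply: eq_bigr => i _; rewrite ffunE.
Qed.

Lemma occ_count x a : occ x a = (count_mem a (map x (enum 'I_N)))%:R.
Proof.
rewrite count_map -sum1_count natr_sum big_mkcond big_enum /=.
by apply: eq_big => // i; case: eqP.
Qed.

Lemma coordIsE (x : cf) (i : 'I_N) a : coordIs x (val i) a = (x i == a).
Proof.
apply/existsP/idP => [[j /andP [/eqP/val_inj -> //]]|xia].
by exists i; rewrite eqxx.
Qed.

Lemma M1E (N_gt0 : (0 < N)%N) (g : {ffun cf -> R}) a :
  M1 g a = \sum_(x : cf) (x (Ordinal N_gt0) == a)%:R * g x.
Proof.
rewrite ffunE big_mkcond; apply: eq_bigr => x _.
by rewrite -[0%N]/(val (Ordinal N_gt0)) coordIsE; case: eqP; rewrite ?mul1r ?mul0r.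
Qed.

Lemma M2E (N_gt1 : (1 < N)%N) (g : {ffun cf -> R}) a b :
  M2 g (a, b) =
  \sum_(x : cf) ((x (Ordinal (ltnW N_gt1)) == a) && (x (Ordinal N_gt1) == b))%:R * g x.
Proof.
rewrite ffunE big_mkcond; apply: eq_bigr => x _ /=.
rewrite -[1%N]/(val (Ordinal N_gt1)) -[0%N]/(val (Ordinal (ltnW N_gt1))) !coordIsE.
by case: (_ && _); rewrite ?mul1r ?mul0r.
Qed.

Lemma sum_mul_occ (g : {ffun cf -> R}) a : (0 < N)%N -> perm_invariant g ->
  \sum_x g x * occ x a = N%:R * M1 g a.
Proof.
move=> N_gt0 g_inv; pose i0 : 'I_N := Ordinal N_gt0.
have coordE k : \sum_x g x * (x k == a)%:R = \sum_x g x * (x i0 == a)%:R.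
  rewrite -(sum_invariant_mul_perm (fun y => (y i0 == a)%:R) (tperm i0 k) g_inv).
  by apply: eq_bigr => x _; rewrite ffunE tpermL.
under eq_bigr do rewrite /occ mulr_sumr.
rewrite exchange_big /=; under eq_bigr do rewrite coordE.
rewrite sumr_const card_ord (M1E N_gt0) mulr_natl.
by congr (_ *+ _); apply: eq_bigr => x _; rewrite mulrC.
Qed.

Lemma occ_pairsE (x : cf) a b :
  occ x a * occ x b - (a == b)%:R * occ x a =
  \sum_k \sum_(k' | k' != k) ((x k == a) && (x k' == b))%:R.
Proof.
rewrite /occ mulr_suml mulr_sumr -sumrB; apply: eq_bigr => k _.
rewrite mulr_sumr (bigD1 k) //= addrC -addrA.
suff -> : (x k == a)%:R * (x k == b)%:R - (a == b)%:R * (x k == a)%:R = 0 :> R.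
  by rewrite addr0; apply: eq_bigr => k' _; rewrite -natrM mulnb.
by case: (x k =P a) => [<-|_]; rewrite ?mul1r ?mulr1 ?mul0r ?mulr0 subrr.
Qed.

Lemma sum_mul_occ_pairs (g : {ffun cf -> R}) a b : (1 < N)%N -> perm_invariant g ->
  \sum_x g x * (occ x a * occ x b - (a == b)%:R * occ x a)
    = (N * N.-1)%:R * M2 g (a, b).
Proof.
move=> N_gt1 g_inv; pose i0 : 'I_N := Ordinal (ltnW N_gt1); pose i1 : 'I_N := Ordinal N_gt1.
have coordE k k' : k' != k -> \sum_x g x * ((x k == a) && (x k' == b))%:R =
    \sum_x g x * ((x i0 == a) && (x i1 == b))%:R.
  move=> k'k; have [p [p0 p1]] : exists p : 'S_N, p i0 = k /\ p i1 = k'.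
    by apply: exists_perm_pair; rewrite // eq_sym.
  rewrite -(sum_invariant_mul_perm (fun y => ((y i0 == a) && (y i1 == b))%:R) p g_inv).
  by apply: eq_bigr => x _; rewrite !ffunE p0 p1.
under eq_bigr do rewrite occ_pairsE mulr_sumr.
rewrite exchange_big /=.
under eq_bigr => k _.
  under eq_bigr do rewrite mulr_sumr.
  rewrite exchange_big /=; under eq_bigr => k' k'k do rewrite (coordE _ _ k'k).
  over.
rewrite /= (M2E N_gt1).
under eq_bigr do rewrite sumr_const cardC1 card_ord.
rewrite sumr_const card_ord -mulrnA mulr_natl mulnC; congr (_ *+ _).
by apply: eq_bigr => x _; rewrite mulrC.
Qed.

End Occupation.

Arguments occ {R l N}.

Section SortedConfiguration.
Variables (R : realType) (l N : nat).
Local Notation cf := (cfg l N).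

Definition dirac (z : cf) : {ffun cf -> R} := [ffun y => (y == z)%:R].

Lemma sum_dirac_mul (z : cf) (F : cf -> R) : \sum_x dirac z x * F x = F z.
Proof.
rewrite (bigD1 z) //= ffunE eqxx mul1r big1 ?addr0 // => x /negbTE.
by rewrite ffunE => ->; rewrite mul0r.
Qed.

Lemma map_enum_inj (y z : cf) : map y (enum 'I_N) = map z (enum 'I_N) -> y = z.
Proof.
move=> yz; apply/ffunP => i; have := congr1 (nth (y i) ^~ i) yz.
by rewrite !(nth_map i) -?enumT ?size_enum_ord // nth_ord_enum.
Qed.

Lemma prodDirac_dirac (z : cf) s : map z (enum 'I_N) = s -> prodDirac R N s = dirac z.
Proof.
move=> <-; apply/ffunP => y; rewrite !ffunE.
have -> : (map y (enum 'I_N) == map z (enum 'I_N)) = (y == z).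
  by apply/eqP/eqP => [/map_enum_inj | ->].
by case: (y == z).
Qed.

Lemma exists_cfg_seq (s : seq 'I_l) : size s = N -> exists z : cf, map z (enum 'I_N) = s.
Proof.
move=> /eqP sN; exists [ffun i => tnth (Tuple sN) i].
rewrite -[RHS]/(tval (Tuple sN)) -map_tnth_enum.
by apply: eq_map => i; rewrite ffunE.
Qed.

Lemma count_sortedSeq (lam : {ffun 'I_l -> R}) a :
  count_mem a (sortedSeq N lam) = mult N lam a.
Proof.
rewrite /sortedSeq count_flatten -map_comp sumnE big_map big_enum /=.
under eq_bigr do rewrite count_nseq /=.
rewrite (bigD1 a) //= eqxx mul1n big1 ?addn0 // => i /negbTE.
by rewrite eq_sym => ->.
Qed.

Hypothesis N_gt0 : (0 < N)%N.

Lemma natr_N_neq0 : (N%:R : R) != 0.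
Proof. by rewrite pnatr_eq0 -lt0n. Qed.

Lemma mult_P1N (lam : {ffun 'I_l -> R}) a : P1N N lam -> (mult N lam a)%:R = lam a * N%:R.
Proof. by case=> _ /(_ a) [k lamE]; rewrite /mult lamE mulfVK ?natr_N_neq0 // natrK. Qed.

Lemma size_sortedSeq (lam : {ffun 'I_l -> R}) : P1N N lam -> size (sortedSeq N lam) = N.
Proof.
move=> lamP; apply/eqP; rewrite -(eqr_nat R).
rewrite /sortedSeq size_flatten /shape -map_comp sumnE big_map big_enum /= natr_sum.
under eq_bigr do rewrite size_nseq mult_P1N //.
by rewrite -mulr_suml lamP.1.2 mul1r.
Qed.

Lemma exists_cfg_sortedSeq (lam : {ffun 'I_l -> R}) : P1N N lam ->
  exists z : cf, map z (enum 'I_N) = sortedSeq N lam.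
Proof. by move=> lamP; apply: exists_cfg_seq; rewrite size_sortedSeq. Qed.

Lemma occ_sortedSeq (lam : {ffun 'I_l -> R}) (z : cf) a : P1N N lam ->
  map z (enum 'I_N) = sortedSeq N lam -> occ z a = lam a * N%:R.
Proof. by move=> lamP zE; rewrite occ_count zE count_sortedSeq mult_P1N. Qed.

End SortedConfiguration.

Arguments dirac {R l N}.

Section PsiPhi.
Variables (R : realType) (l N : nat).
Local Notation cf := (cfg l N).
Local Notation lamT := {ffun 'I_l -> R}.

Lemma psiN_ge0 (lam : lamT) (x : cf) : 0 <= psiN N lam x.
Proof.
rewrite /psiN symmetrizeE mulr_ge0 ?invr_ge0 ?ler0n // sumr_ge0 // => s _.
by rewrite ffunE; case: eqP.
Qed.

(* psi_N(lam) is the uniform measure on the orbit of any configuration z with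
   occupation numbers N lam, so it integrates invariant functions by evaluation at z. *)
Lemma sum_psiN_mul (lam : lamT) (z : cf) (F : cf -> R) :
  map z (enum 'I_N) = sortedSeq N lam -> perm_invariant F ->
  \sum_x psiN N lam x * F x = F z.
Proof.
move=> zE F_inv; rewrite /psiN (prodDirac_dirac R zE) (sum_symmetrize_mul _ F_inv).
exact: sum_dirac_mul.
Qed.

Lemma psiN_invariant (lam : lamT) : perm_invariant (psiN N lam).
Proof. exact: symmetrize_invariant. Qed.

Hypothesis N_gt0 : (0 < N)%N.

Lemma psiN_sum1 (lam : lamT) : P1N N lam -> \sum_x psiN N lam x = 1.
Proof.
move=> lamP; have [z zE] := exists_cfg_sortedSeq N_gt0 lamP.
rewrite -(sum_psiN_mul (F := fun _ => 1) zE) //.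
by apply: eq_bigr => x _; rewrite mulr1.
Qed.

Lemma M1_psiN (lam : lamT) : P1N N lam -> M1 (psiN N lam) = lam.
Proof.
move=> lamP; have [z zE] := exists_cfg_sortedSeq N_gt0 lamP.
apply/ffunP => a; apply: (mulfI (natr_N_neq0 R N_gt0)).
rewrite -sum_mul_occ //; last exact: psiN_invariant.
rewrite (sum_psiN_mul zE) => [|x s]; last exact: occ_perm.
by rewrite (occ_sortedSeq N_gt0 _ lamP zE) mulrC.
Qed.

Lemma M2_psiN (lam : lamT) : (1 < N)%N -> P1N N lam -> M2 (psiN N lam) = phiN N lam.
Proof.
move=> N_gt1 lamP; have [z zE] := exists_cfg_sortedSeq N_gt0 lamP.
apply/ffunP => -[a b].
have := sum_mul_occ_pairs a b N_gt1 (psiN_invariant lam).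
rewrite (sum_psiN_mul zE) => [|x s]; last by rewrite !occ_perm.
rewrite !(occ_sortedSeq N_gt0 _ lamP zE) natrM -subn1 natrB // => pairsE.
have N1_neq0 : (N%:R - 1 : R) != 0 by rewrite subr_eq0 pnatr_eq1 gtn_eqF.
apply: (mulfI (mulf_neq0 (natr_N_neq0 R N_gt0) N1_neq0)).
by rewrite -pairsE [phiN N lam (a, b)]ffunE /=; field.
Qed.

End PsiPhi.

Section MarginalsOfMarginals.
Variables (R : realType) (l N : nat).
Local Notation cf := (cfg l N).

Lemma sum_M1 (g : {ffun cf -> R}) : (0 < N)%N -> \sum_a M1 g a = \sum_x g x.
Proof.
move=> N_gt0; under eq_bigr do rewrite (M1E N_gt0).
rewrite exchange_big /=; apply: eq_bigr => x _.
rewrite -mulr_suml (bigD1 (x (Ordinal N_gt0))) //= eqxx big1 ?addr0 ?mul1r // => b.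
by rewrite eq_sym => /negbTE ->.
Qed.

Hypothesis N_gt1 : (1 < N)%N.

Lemma M1two_M2 (g : {ffun cf -> R}) : M1two (M2 g) = M1 g.
Proof.
apply/ffunP => a; rewrite ffunE (M1E (ltnW N_gt1)).
under eq_bigr do rewrite (M2E N_gt1).
rewrite exchange_big /=; apply: eq_bigr => x _; rewrite -mulr_suml.
rewrite (bigD1 (x (Ordinal N_gt1))) //= eqxx andbT big1 ?addr0 // => b.
by rewrite eq_sym => /negbTE ->; rewrite andbF.
Qed.

Lemma isProb_M2 (g : {ffun cf -> R}) : isProb g -> isProb (M2 g).
Proof.
move=> [g_ge0 g_sum1]; split=> [p|].
  by rewrite ffunE; apply: sumr_ge0 => x _; exact: g_ge0.
rewrite -g_sum1 -(sum_M1 g (ltnW N_gt1)) -M1two_M2.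
rewrite (eq_bigr (fun p => M2 g (p.1, p.2))) => [|[] //].
by rewrite -(pair_bigA _ (fun a b => M2 g (a, b))); apply: eq_bigr => a _; rewrite ffunE.
Qed.

End MarginalsOfMarginals.

Section Mixtures.
Variables (R : realType) (l : nat).
Local Notation lamT := {ffun 'I_l -> R}.

Definition mixture (T : finType) (S : seq lamT) (alpha : lamT -> R)
    (f : lamT -> {ffun T -> R}) : {ffun T -> R} :=
  [ffun x => \sum_(lam <- S) alpha lam * f lam x].

Lemma sum_mul_mixture (T : finType) S alpha f (G : T -> R) :
  \sum_x G x * mixture S alpha f x = \sum_(lam <- S) alpha lam * \sum_x G x * f lam x.
Proof.
under eq_bigr do rewrite ffunE mulr_sumr.
rewrite exchange_big /=; apply: eq_bigr => lam _.
by rewrite mulr_sumr; apply: eq_bigr => x _; rewrite mulrCA.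
Qed.

Definition convex_weights (N : nat) (ls : lamT) (S : seq lamT) (alpha : lamT -> R) :=
  [/\ uniq S, forall lam, lam \in S -> P1N N lam /\ 0 <= alpha lam,
      \sum_(lam <- S) alpha lam = 1
    & forall i, \sum_(lam <- S) alpha lam * lam i = ls i].

Lemma admissible_convex_weights N ls S alpha :
  admissible N ls S alpha -> convex_weights N ls S alpha.
Proof. by case. Qed.

End Mixtures.

Section MixturesOfPsi.
Variables (R : realType) (l N : nat) (ls : {ffun 'I_l -> R}).
Local Notation lamT := {ffun 'I_l -> R}.
Hypothesis N_gt0 : (0 < N)%N.

Lemma mixture_Psym_at S alpha : convex_weights N ls S alpha ->
  Psym_at ls (mixture S alpha (psiN N)).
Proof.
case=> _ S_P1N sum1 bary; split; first split; first split.
- move=> x; rewrite ffunE big_seq; apply: sumr_ge0 => lam /S_P1N[_ ge0].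
  exact: mulr_ge0 (psiN_ge0 _ _).
- transitivity (\sum_x 1 * mixture S alpha (psiN N) x).
    by apply: eq_bigr => x _; rewrite mul1r.
  rewrite sum_mul_mixture -[RHS]sum1 big_seq [RHS]big_seq.
  apply: eq_bigr => lam /S_P1N[lamP _].
  by under eq_bigr do rewrite mul1r; rewrite psiN_sum1 ?mulr1.
- apply: symmetrize_id => x s; rewrite !ffunE; apply: eq_bigr => lam _.
  by rewrite psiN_invariant.
- apply/ffunP => a; rewrite (M1E N_gt0).
  rewrite sum_mul_mixture -bary big_seq [RHS]big_seq.
  apply: eq_bigr => lam /S_P1N[lamP _]; congr (_ * _).
  by rewrite -{2}(M1_psiN N_gt0 lamP) (M1E N_gt0).
Qed.

Lemma M2_mixture_psiN (S : seq lamT) alpha : (1 < N)%N ->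
  (forall lam, lam \in S -> P1N N lam) ->
  M2 (mixture S alpha (psiN N)) = mixture S alpha (phiN N).
Proof.
move=> N_gt1 S_P1N; apply/ffunP => -[a b].
rewrite (M2E N_gt1) sum_mul_mixture ffunE big_seq [RHS]big_seq.
apply: eq_bigr => lam /S_P1N lamP; congr (_ * _).
by rewrite -(M2_psiN N_gt0 N_gt1 lamP) (M2E N_gt1).
Qed.

Lemma mixture_Nrep_at (N_gt1 : (1 < N)%N) S alpha : convex_weights N ls S alpha ->
  Nrep_at N ls (mixture S alpha (phiN N)).
Proof.
move=> w; have [g_sym gM1] := mixture_Psym_at w.
have [_ S_P1N _ _] := w.
rewrite -M2_mixture_psiN // => [|lam /S_P1N[] //].
split; last by rewrite M1two_M2.
split; first exact: isProb_M2 g_sym.1.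
by exists (mixture S alpha (psiN N)).
Qed.

End MixturesOfPsi.

Section SymmetricDecomposition.
Variables (R : realType) (l N : nat).
Local Notation cf := (cfg l N).
Local Notation lamT := {ffun 'I_l -> R}.
Hypothesis N_gt0 : (0 < N)%N.

Definition emp (x : cf) : lamT := [ffun a => occ x a / N%:R].

Lemma emp_P1N x : P1N N (emp x).
Proof.
split; first split.
- by move=> a; rewrite ffunE divr_ge0 ?ler0n // sumr_ge0 // => i _; exact: ler0n.
- under eq_bigr do rewrite ffunE.
  rewrite -mulr_suml /occ exchange_big /=.
  under eq_bigr => i _.
    rewrite (bigD1 (x i)) //= eqxx big1 ?addr0; last by move=> a; rewrite eq_sym => /negbTE ->.
    over.
  by rewrite sumr_const card_ord -mulr_natl mulr1 mulfV ?natr_N_neq0.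
- by move=> a; exists (count_mem a (map x (enum 'I_N))); rewrite ffunE occ_count.
Qed.

Lemma dirac_perm (x : cf) p :
  dirac (perm_cfg x p) = [ffun y => dirac x (perm_cfg y (p^-1)%g)] :> {ffun cf -> R}.
Proof.
apply/ffunP => y; rewrite !ffunE.
have -> // : (perm_cfg y (p^-1)%g == x) = (y == perm_cfg x p).
by apply/eqP/eqP => [<-|->]; rewrite perm_cfgM ?mulgV ?mulVg perm_cfg1.
Qed.

Lemma symmetrize_dirac (x : cf) : symmetrize (dirac x) = psiN N (emp x).
Proof.
have [z zE] := exists_cfg_sortedSeq N_gt0 (emp_P1N x).
rewrite /psiN (prodDirac_dirac R zE).
have : perm_eq (map z (enum 'I_N)) [tuple x i | i < N].
  apply/allP => a _; apply/eqP; rewrite zE count_sortedSeq.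
  apply/eqP; rewrite -(eqr_nat R) (mult_P1N N_gt0 _ (emp_P1N x)) ffunE.
  by rewrite divfK ?natr_N_neq0 // occ_count.
case/tuple_permP => p zp.
have -> : z = perm_cfg x p.
  by apply: map_enum_inj; rewrite zp /=; apply: eq_map => i; rewrite tnth_mktuple ffunE.
by rewrite dirac_perm symmetrize_perm.
Qed.

Lemma symmetric_decomp (g : {ffun cf -> R}) : symmetrize g = g ->
  forall y, g y = \sum_x g x * psiN N (emp x) y.
Proof.
move=> g_sym y; rewrite -{1}g_sym symmetrizeE.
under [in RHS]eq_bigr do rewrite -symmetrize_dirac symmetrizeE mulrCA.
rewrite -mulr_sumr; congr (_ * _).
under [RHS]eq_bigr do rewrite mulr_sumr.
rewrite [RHS]exchange_big /=; apply: eq_bigr => s _.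
rewrite -[LHS](sum_dirac_mul (perm_cfg y s) g).
by apply: eq_bigr => x _; rewrite !ffunE eq_sym mulrC.
Qed.

Definition emp_support : seq lamT := undup (map emp (enum cf)).

Definition emp_weight (g : {ffun cf -> R}) (lam : lamT) : R := \sum_(x | emp x == lam) g x.

Lemma sum_mul_emp (g : {ffun cf -> R}) (G : lamT -> R) :
  \sum_x g x * G (emp x) = \sum_(lam <- emp_support) emp_weight g lam * G lam.
Proof.
under [RHS]eq_bigr do rewrite /emp_weight big_mkcond mulr_suml.
rewrite exchange_big /=; apply: eq_bigr => x _.
have x_supp : emp x \in emp_support by rewrite mem_undup map_f ?mem_enum.
rewrite (bigD1_seq (emp x)) ?undup_uniq //= eqxx /= big1 ?addr0 // => lam.
by rewrite eq_sym => /negbTE ->; rewrite mul0r.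
Qed.

Lemma Psym_at_mixture (ls : lamT) (g : {ffun cf -> R}) : Psym_at ls g ->
  exists S alpha, convex_weights N ls S alpha /\ g = mixture S alpha (psiN N).
Proof.
move=> [[[g_ge0 g_sum1] g_sym] gM1].
have g_inv : perm_invariant g by rewrite -g_sym; exact: symmetrize_invariant.
exists emp_support, (emp_weight g); split; first split.
- exact: undup_uniq.
- move=> lam; rewrite mem_undup => /mapP [x _ ->]; split; first exact: emp_P1N.
  by apply: sumr_ge0 => y _; exact: g_ge0.
- transitivity (\sum_(lam <- emp_support) emp_weight g lam * 1).
    by apply: eq_bigr => lam _; rewrite mulr1.
  by rewrite -sum_mul_emp -[RHS]g_sum1; apply: eq_bigr => x _; rewrite mulr1.
- move=> i; rewrite -(sum_mul_emp g (fun lam => lam i)) -gM1.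
  apply: (mulfI (natr_N_neq0 R N_gt0)); rewrite -(sum_mul_occ i N_gt0 g_inv) mulr_sumr.
  by apply: eq_bigr => x _; rewrite ffunE mulrCA [N%:R * _]mulrC divfK ?natr_N_neq0.
- apply/ffunP => y; rewrite (symmetric_decomp g_sym y) ffunE.
  exact: (sum_mul_emp g (fun lam => psiN N lam y)).
Qed.

End SymmetricDecomposition.

Section AffineDependence.
Variables (R : realType) (l : nat).
Local Notation lamT := {ffun 'I_l -> R}.

Definition affine_dep (S : seq lamT) (beta : lamT -> R) :=
  \sum_(lam <- S) beta lam = 0 /\ forall i, \sum_(lam <- S) beta lam * lam i = 0.

Lemma exists_affine_dep (S : seq lamT) : uniq S ->
  (forall lam, lam \in S -> \sum_i lam i = 1) -> (l < size S)%N ->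
  exists2 beta, affine_dep S beta & exists2 lam, lam \in S & beta lam != 0.
Proof.
move=> S_uniq S_sum1 lt_l_S.
pose v (k : 'I_(size S)) := nth 0 S k.
pose M : 'M[R]_(size S, l) := \matrix_(k, i) v k i.
have [w wM w_neq0] : exists2 w : 'rV_(size S), w *m M = 0 & w != 0.
  have : kermx M != 0.
    by rewrite kermx_eq0 /row_free neq_ltn (leq_ltn_trans (rank_leq_col M) lt_l_S).
  by case/rowV0Pn => w /sub_kermxP wM w_neq0; exists w.
pose beta lam := if insub (index lam S) is Some k then w 0 k else 0.
have betaE k : beta (v k) = w 0 k by rewrite /beta index_uniq // valK.
have sum_beta (H : lamT -> R) : \sum_(lam <- S) beta lam * H lam = \sum_k w 0 k * H (v k).
  by rewrite (big_nth 0) big_mkord; apply: eq_bigr => k _; rewrite betaE.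
have dep i : \sum_k w 0 k * v k i = 0.
  have := congr1 (fun A : 'rV_l => A 0 i) wM; rewrite !mxE.
  by under eq_bigr do rewrite mxE.
exists beta.
  split=> [|i]; last by rewrite (sum_beta (fun lam => lam i)) dep.
  transitivity (\sum_(lam <- S) beta lam * \sum_i lam i).
    by rewrite big_seq [RHS]big_seq; apply: eq_bigr => lam /S_sum1 ->; rewrite mulr1.
  rewrite (sum_beta (fun lam => \sum_i lam i)); under eq_bigr do rewrite mulr_sumr.
  by rewrite exchange_big big1.
have [k wk] : exists k, w 0 k != 0.
  apply/existsP; apply: contraNT w_neq0 => /existsPn w0.
  by apply/eqP/rowP => k; rewrite mxE; apply/eqP/negPn/w0.
by exists (v k); [exact: mem_nth | rewrite betaE].
Qed.

Lemma exists_boundary_scaling (T : eqType) (S : seq T) (alpha beta : T -> R) :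
  (forall t, t \in S -> 0 <= alpha t) -> (exists2 t, t \in S & beta t != 0) ->
  exists c, exists2 t0, t0 \in S &
    alpha t0 + c * beta t0 = 0 /\ forall t, t \in S -> `|c * beta t| <= alpha t.
Proof.
move=> alpha_ge0 [t1 t1S bt1].
pose v (k : 'I_(size S)) := nth t1 S k.
have ordS t : t \in S -> {k | v k = t}.
  by move=> tS; exists (Ordinal (etrans (index_mem t S) tS)); rewrite /v nth_index.
have vS k : v k \in S by exact: mem_nth.
have [k1 vk1] := ordS t1 t1S.
have bk1 : beta (v k1) != 0 by rewrite vk1.
have [k0 bk0 k0_min] := @arg_minP _ R _ k1 (fun k => beta (v k) != 0)
  (fun k => alpha (v k) / `|beta (v k)|) bk1.
exists (- (alpha (v k0) / beta (v k0))), (v k0) => //.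
split=> [|t tS]; first by field.
have [k vk] := ordS t tS; rewrite -vk.
have [->|bk] := eqVneq (beta (v k)) 0; first by rewrite mulr0 normr0 alpha_ge0.
rewrite normrM normrN normf_div (ger0_norm (alpha_ge0 _ (vS k0))).
by rewrite -ler_pdivlMr ?normr_gt0 //; exact: k0_min.
Qed.

Lemma sum_rem_weight0 (T : eqType) (S : seq T) (alpha G : T -> R) t0 :
  t0 \in S -> alpha t0 = 0 ->
  \sum_(t <- rem t0 S) alpha t * G t = \sum_(t <- S) alpha t * G t.
Proof. by move=> t0S a0; rewrite [RHS](big_rem t0) //= a0 mul0r add0r. Qed.

End AffineDependence.

Section ExtremeMixtures.
Variables (R : realType) (l N : nat) (ls : {ffun 'I_l -> R}).
Variables (T : finType) (C : {ffun T -> R} -> Prop) (f : {ffun 'I_l -> R} -> {ffun T -> R}).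
Local Notation lamT := {ffun 'I_l -> R}.

Lemma convex_weights_shift (S : seq lamT) alpha beta c :
  convex_weights N ls S alpha -> affine_dep S beta ->
  (forall lam, lam \in S -> `|c * beta lam| <= alpha lam) ->
  convex_weights N ls S (fun lam => alpha lam + c * beta lam).
Proof.
case=> S_uniq S_P1N sum1 bary [dep0 dep] bound; split=> //.
- move=> lam lamS; split; first exact: (S_P1N _ lamS).1.
  by have := ler_norm (- (c * beta lam)); rewrite normrN; have := bound _ lamS; lra.
- by rewrite big_split /= -mulr_sumr dep0 mulr0 addr0.
- move=> i; under eq_bigr do rewrite mulrDl -mulrA.
  by rewrite big_split /= -mulr_sumr dep mulr0 addr0.
Qed.

Lemma mixture_shiftE (S : seq lamT) alpha beta c x :
  mixture S (fun lam => alpha lam + c * beta lam) f x =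
  mixture S alpha f x + c * mixture S beta f x.
Proof.
rewrite !ffunE mulr_sumr -big_split.
by apply: eq_bigr => lam _; rewrite mulrDl mulrA.
Qed.

Lemma convex_weights_rem (S : seq lamT) alpha lam0 : lam0 \in S -> alpha lam0 = 0 ->
  convex_weights N ls S alpha -> convex_weights N ls (rem lam0 S) alpha.
Proof.
move=> lam0S a0 [S_uniq S_P1N sum1 bary]; split.
- exact: rem_uniq.
- by move=> lam /mem_rem; exact: S_P1N.
- by rewrite -sum1 [RHS](big_rem lam0) //= a0 add0r.
- by move=> i; rewrite sum_rem_weight0.
Qed.

Lemma mixture_rem (S : seq lamT) alpha lam0 : lam0 \in S -> alpha lam0 = 0 ->
  mixture (rem lam0 S) alpha f = mixture S alpha f.
Proof. by move=> lam0S a0; apply/ffunP => x; rewrite !ffunE sum_rem_weight0. Qed.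

Hypothesis C_mixture : forall S alpha, convex_weights N ls S alpha -> C (mixture S alpha f).

(* The weights alpha + c beta and alpha - c beta are both admissible and their
   mixtures average to y. *)
Lemma extreme_mixture_shift y (S : seq lamT) alpha beta c : extreme C y ->
  convex_weights N ls S alpha -> y = mixture S alpha f -> affine_dep S beta ->
  (forall lam, lam \in S -> `|c * beta lam| <= alpha lam) ->
  y = mixture S (fun lam => alpha lam + c * beta lam) f.
Proof.
move=> [_ y_extreme] w yE dep bound.
have boundN lam : lam \in S -> `|- c * beta lam| <= alpha lam.
  by rewrite mulNr normrN; exact: bound.
have half : 0 < (2^-1 : R) < 1 by rewrite invr_gt0 ltr0n invf_lt1 ?ltr0n ?ltr1n.
have avg x : y x = 2^-1 * mixture S (fun lam => alpha lam + - c * beta lam) f x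
    + (1 - 2^-1) * mixture S (fun lam => alpha lam + c * beta lam) f x.
  by rewrite !mixture_shiftE -yE; field.
have shift_eq := y_extreme _ _ _ (C_mixture (convex_weights_shift w dep boundN))
  (C_mixture (convex_weights_shift w dep bound)) half avg.
apply/ffunP => x.
have := congr1 (fun g : {ffun T -> R} => g x) shift_eq.
by rewrite /= !mixture_shiftE -yE; lra.
Qed.

Lemma extreme_mixture_reduce y (S : seq lamT) alpha : extreme C y ->
  convex_weights N ls S alpha -> y = mixture S alpha f -> (l < size S)%N ->
  exists S' alpha', [/\ convex_weights N ls S' alpha', y = mixture S' alpha' f
                      & (size S' < size S)%N].
Proof.
move=> y_ext w yE lt_l_S; have [S_uniq S_P1N _ _] := w.
have [beta dep beta_neq0] :=
  exists_affine_dep S_uniq (fun lam lamS => (S_P1N lam lamS).1.1.2) lt_l_S.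
have [c [lam0 lam0S [a0 bound]]] :=
  exists_boundary_scaling (fun lam lamS => (S_P1N lam lamS).2) beta_neq0.
exists (rem lam0 S), (fun lam => alpha lam + c * beta lam); split.
- exact: convex_weights_rem a0 (convex_weights_shift w dep bound).
- by rewrite mixture_rem //; exact: extreme_mixture_shift y_ext w yE dep bound.
- by rewrite size_rem // prednK // (leq_ltn_trans _ lt_l_S).
Qed.

Lemma extreme_mixture_admissible y (S : seq lamT) alpha : extreme C y ->
  convex_weights N ls S alpha -> y = mixture S alpha f ->
  exists S' alpha', admissible N ls S' alpha' /\
    forall x, y x = \sum_(lam <- S') alpha' lam * f lam x.
Proof.
move=> y_ext; have [n] := ubnP (size S); elim: n S alpha => // n IH S alpha.
rewrite ltnS => le_S_n w yE; have [le_S_l|lt_l_S] := leqP (size S) l.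
  have [S_uniq S_P1N sum1 bary] := w.
  by exists S, alpha; split=> [|x]; [split | rewrite yE ffunE].
have [S' [alpha' [w' yE' lt_S'_S]]] := extreme_mixture_reduce y_ext w yE lt_l_S.
exact: IH (leq_trans lt_S'_S le_S_n) w' yE'.
Qed.

End ExtremeMixtures.

Theorem lemma5p1 (R : realType) (l N : nat) (ls : {ffun 'I_l -> R}) :
  (2 <= N)%N -> isProb ls ->
  ((forall g : {ffun cfg l N -> R}, extreme (Psym_at ls) g -> SAE_at ls g) /\
   (forall g : {ffun cfg l N -> R}, SAE_at ls g -> Psym_at ls g)) /\
  ((forall mu : {ffun 'I_l * 'I_l -> R}, extreme (Nrep_at N ls) mu -> NSAE_at N ls mu) /\
   (forall mu : {ffun 'I_l * 'I_l -> R}, NSAE_at N ls mu -> Nrep_at N ls mu)).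
Proof.
move=> N_gt1 _; have N_gt0 := ltnW N_gt1; split; split.
- move=> g g_ext; have [S [alpha [w gE]]] := Psym_at_mixture N_gt0 g_ext.1.
  exact: (extreme_mixture_admissible (C := Psym_at ls) (mixture_Psym_at N_gt0) g_ext w gE).
- move=> g [S [alpha [adm gE]]].
  have -> : g = mixture S alpha (psiN N) by apply/ffunP => x; rewrite gE ffunE.
  exact/mixture_Psym_at/admissible_convex_weights.
- move=> mu mu_ext; have [[_ [g [g_sym gM2]]] muM1] := mu_ext.1.
  have gM1 : M1 g = ls by rewrite -(M1two_M2 N_gt1) gM2.
  have [S [alpha [w gE]]] := Psym_at_mixture N_gt0 (conj g_sym gM1).
  have muE : mu = mixture S alpha (phiN N).
    by case: w => _ S_P1N _ _; rewrite -gM2 gE M2_mixture_psiN // => lam /S_P1N[].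
  exact: (extreme_mixture_admissible (C := Nrep_at N ls)
           (mixture_Nrep_at N_gt0 N_gt1) mu_ext w muE).
- move=> mu [S [alpha [adm muE]]].
  have -> : mu = mixture S alpha (phiN N) by apply/ffunP => x; rewrite muE ffunE.
  exact/(mixture_Nrep_at N_gt0 N_gt1)/admissible_convex_weights.
Qed.
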